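(* Let $k\ge3$, $n\ge0$, $G\in\mathcal G_k(n)$, and let $v$ be a $G$-good vertex. Then $d_G(v)\le\delta_k(n)$.
   Context: $d_G(v)$ is the degree of vertex $v$ in the hypergraph $G$. For $k\ge3$, $n\ge0$, the family $\mathcal G_k(n)$ of $n$-vertex $k$-uniform hypergraphs is defined inductively: for $n<k$ it consists of the single edgeless $n$-vertex $k$-graph; for $n\ge k$, $G\in\mathcal G_k(n)$ if its vertex set $V$ has a partition $V=V_1\cup\dots\cup V_k$ (the defining partition) with $0\le|V_i|<n$ for all $i$, such that $G[V_i]\in\mathcal G_k(|V_i|)$ for each $i$, and the edges of $G$ are the edges of the $G[V_i]$ together with all $k$-sets having exactly one vertex in each $V_i$. $H_k(n)\in\mathcal G_k(n)$ is defined by: for $n<k$ it is the edgeless graph; for $n\ge k$ its defining partition is equitable ($||V_i|-|V_j||\le1$) and $H_k(n)[V_i]\cong H_k(|V_i|)$ for each $i$. A vertex $v$ of $G\in\mathcal G_k(n)$ is $G$-good if either $n<k$, or $n\ge k$ and, with defining partition $V_1\cup\dots\cup V_k$, $v$ lies in a part $V_i$ of maximum size and $v$ is $G[V_i]$-good. $\delta_k(n)$ denotes $d_{H_k(n)}(v)$ for an $H_k(n)$-good vertex $v$ (all $H_k(n)$-good vertices have the same degree). *)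

From mathcomp Require Import all_boot.
Set Implicit Arguments. Unset Strict Implicit. Unset Printing Implicit Defensive.

Section Hyper.
Variable T : finType.
Variable k : nat.

Definition deg (E : {set {set T}}) (v : T) : nat := #|[set e in E | v \in e]|.

(* P : 'I_k -> {set T} is a partition of V into k (possibly empty) parts,
   each of size < |V| *)
Definition kpartition (V : {set T}) (P : 'I_k -> {set T}) : Prop :=
  [/\ forall i j, i != j -> [disjoint P i & P j],
      \bigcup_(i < k) P i = V &
      forall i, #|P i| < #|V| ].

Definition equitable (P : 'I_k -> {set T}) : Prop :=
  forall i j, #|P i| <= #|P j| + 1.

Definition joinE (V : {set T}) (P : 'I_k -> {set T})
    (Es : 'I_k -> {set {set T}}) : {set {set T}} :=
  (\bigcup_(i < k) Es i) :|:
  [set e : {set T} | [&& e \subset V, #|e| == k & [forall i, #|e :&: P i| == 1]]].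

(* inG V E : the hypergraph (V, E) belongs to G_k(|V|) *)
Inductive inG : {set T} -> {set {set T}} -> Prop :=
| inG_small (V : {set T}) : #|V| < k -> inG V set0
| inG_step (V : {set T}) (P : 'I_k -> {set T}) (Es : 'I_k -> {set {set T}}) : k <= #|V| -> kpartition V P ->
    (forall i, inG (P i) (Es i)) -> inG V (joinE V P Es).

(* goodG V E v : v is a good vertex of (V,E) in G_k(|V|), with respect to a
   defining partition (recursively) *)
Inductive goodG : {set T} -> {set {set T}} -> T -> Prop :=
| goodG_small (V : {set T}) (v : T) : #|V| < k -> v \in V -> goodG V set0 v
| goodG_step (V : {set T}) (P : 'I_k -> {set T}) (Es : 'I_k -> {set {set T}}) (i : 'I_k) (v : T) : k <= #|V| -> kpartition V P ->
    (forall j, inG (P j) (Es j)) ->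
    (forall j, #|P j| <= #|P i|) -> goodG (P i) (Es i) v ->
    goodG V (joinE V P Es) v.

(* isH V E : (V,E) is (a copy of) H_k(|V|) *)
Inductive isH : {set T} -> {set {set T}} -> Prop :=
| isH_small (V : {set T}) : #|V| < k -> isH V set0
| isH_step (V : {set T}) (P : 'I_k -> {set T}) (Es : 'I_k -> {set {set T}}) : k <= #|V| -> kpartition V P -> equitable P ->
    (forall i, isH (P i) (Es i)) -> isH V (joinE V P Es).

(* goodH V E v : v is an H_k(|V|)-good vertex (w.r.t. its equitable
   defining partition) *)
Inductive goodH : {set T} -> {set {set T}} -> T -> Prop :=
| goodH_small (V : {set T}) (v : T) : #|V| < k -> v \in V -> goodH V set0 v
| goodH_step (V : {set T}) (P : 'I_k -> {set T}) (Es : 'I_k -> {set {set T}}) (i : 'I_k) (v : T) : k <= #|V| -> kpartition V P -> equitable P ->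
    (forall j, isH (P j) (Es j)) ->
    (forall j, #|P j| <= #|P i|) -> goodH (P i) (Es i) v ->
    goodH V (joinE V P Es) v.

End Hyper.

From mathcomp Require Import all_boot zify.
Set Implicit Arguments. Unset Strict Implicit. Unset Printing Implicit Defensive.

(* A good vertex v of G lies in a largest part V_i of the defining partition,
   so d_G(v) is d_{G[V_i]}(v) plus the product of the other k - 1 part sizes.
   That product is at most the product [bprod] of the balanced split of
   n - |V_i| into k - 1 parts, with equality for the equitable partition of
   H_k(n), whose largest part has size ceil(n/k).  By induction, d_G(v) is
   thus at most delta(m) + bprod(n - m) with m = |V_i| >= ceil(n/k), and
   [leq_delta_split] shows that this is maximal at m = ceil(n/k); its proof,
   by induction on m, only uses that the increments of [bprod] are
   nondecreasing. *)

Section NondecreasingIncrements.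
Variables (f D : nat -> nat).
Hypothesis f_succ : forall s, f s.+1 = f s + D s.
Hypothesis D_succ : forall s, D s <= D s.+1.

Lemma incr_mono : {homo f : a b / a <= b}.
Proof. by apply: (homo_leq leqnn leq_trans) => s; rewrite f_succ leq_addr. Qed.

Lemma incr_exchange x y L : x <= y -> f (x + L) + f y <= f (y + L) + f x.
Proof.
move=> le_xy; elim: L => [|L IH]; first by rewrite !addn0 addnC.
have : D (x + L) <= D (y + L) by apply: (homo_leq leqnn leq_trans D_succ); rewrite leq_add2r.
rewrite !addnS !f_succ; lia.
Qed.

Lemma incr_superadditive a b : f 0 = 0 -> f a + f b <= f (a + b).
Proof.
by move=> f0; move: (@incr_exchange 0 b a (leq0n b)); rewrite f0 add0n addn0 [b + a]addnC.
Qed.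

End NondecreasingIncrements.

Section BalancedProducts.
Variable I : finType.

Definition balanced (a : I -> nat) := forall x y, a x <= a y + 1.

Lemma bigD2 (R : Type) (idx : R) (op : Monoid.com_law idx) (F : I -> R) (x y : I) :
  x != y ->
  \big[op/idx]_t F t = op (F x) (op (F y) (\big[op/idx]_(t | (t != x) && (t != y)) F t)).
Proof. by move=> nxy; rewrite (bigD1 x) //= (bigD1 y) //= eq_sym. Qed.

Lemma leq_prod_neq (a : I -> nat) (x y : I) :
  a y <= a x -> \prod_(t | t != x) a t <= \prod_(t | t != y) a t.
Proof.
move=> le_yx; case: (eqVneq x y) => [-> // | nxy].
rewrite (bigD1 y) 1?eq_sym // [leqRHS](bigD1 x) //= leq_mul //.
by apply: eq_leq; apply: eq_bigl => t; rewrite andbC.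
Qed.

Section Transfer.
Variables (a : I -> nat) (x y : I).
Hypothesis nxy : x != y.

Definition transfer t := if t == x then (a x).-1 else if t == y then (a y).+1 else a t.

Lemma transfer_other t : (t != x) && (t != y) -> transfer t = a t.
Proof. by case/andP => /negbTE tx /negbTE ty; rewrite /transfer tx ty. Qed.

Lemma transfer_x : transfer x = (a x).-1.
Proof. by rewrite /transfer eqxx. Qed.

Lemma transfer_y : transfer y = (a y).+1.
Proof. by rewrite /transfer eq_sym (negbTE nxy) eqxx. Qed.

Lemma leq_prod_transfer : a y < a x -> \prod_t a t <= \prod_t transfer t.
Proof.
move=> lt_yx; rewrite !(bigD2 _ _ nxy) (eq_bigr _ transfer_other) /= transfer_x transfer_y.
by rewrite !mulnA leq_mul //; nia.
Qed.

Lemma sum_transfer : 0 < a x -> \sum_t transfer t = \sum_t a t.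
Proof.
move=> ax_gt0; rewrite !(bigD2 _ _ nxy) (eq_bigr _ transfer_other) /= transfer_x transfer_y.
lia.
Qed.

Lemma sum_sub_transfer (b : I -> nat) : b x < a x -> a y < b y ->
  \sum_t (transfer t - b t) < \sum_t (a t - b t).
Proof.
move=> lt_x lt_y; rewrite !(bigD2 _ _ nxy) /=.
rewrite (eq_bigr (fun t => a t - b t)) => [|t /transfer_other -> //].
rewrite transfer_x transfer_y; lia.
Qed.

End Transfer.

Lemma leq_prod_balanced (a b : I -> nat) : balanced b ->
  \sum_t a t = \sum_t b t -> \prod_t a t <= \prod_t b t.
Proof.
move=> bal_b; have [N] := ubnP (\sum_t (a t - b t)).
elim: N a => // N IH a ltN sum_ab.
have [x lt_x | le_ab] := pickP (fun t => b t < a t); last first.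
  by apply: leq_prod => t _; move: (le_ab t) => /= /negbT; rewrite -leqNgt.
have [y lt_y | le_ba] := pickP (fun t => a t < b t); last first.
  have : \sum_t b t < \sum_t a t.
    rewrite (bigD1 x) //= [ltnRHS](bigD1 x) //= -addSn leq_add // leq_sum // => t _.
    by move: (le_ba t) => /= /negbT; rewrite -leqNgt.
  by rewrite sum_ab ltnn.
have nxy : x != y by apply: contraTneq lt_x => ->; rewrite -leqNgt ltnW.
apply: leq_trans (leq_prod_transfer nxy _) (IH _ _ _).
- by have := bal_b y x; lia.
- by apply: leq_trans (sum_sub_transfer nxy lt_x lt_y) _.
- by rewrite sum_transfer // (leq_ltn_trans _ lt_x).
Qed.

Lemma prod_balanced_eq (a b : I -> nat) : balanced a -> balanced b ->
  \sum_t a t = \sum_t b t -> \prod_t a t = \prod_t b t.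
Proof.
by move=> bal_a bal_b sum_ab; apply/eqP; rewrite eqn_leq !leq_prod_balanced.
Qed.

End BalancedProducts.

Section BalancedSplit.
Variable p : nat.
Hypothesis p_gt0 : 0 < p.

Definition bpart (s : nat) (t : 'I_p) : nat := s %/ p + (t < s %% p).
Definition bprod (s : nat) : nat := \prod_t bpart s t.

Lemma bpart_balanced s : balanced (bpart s).
Proof. by move=> x y; rewrite /bpart; case: (_ < _); case: (_ < _); lia. Qed.

Lemma sum_bpart s : \sum_t bpart s t = s.
Proof.
rewrite big_split /= sum_nat_const card_ord mulnC [in RHS](divn_eq s p); congr (_ + _).
have le_rp : s %% p <= p by rewrite ltnW // ltn_pmod.
have := @big_ord_widen _ 0 addn _ _ (fun=> 1) le_rp.
rewrite big_const_ord iter_addn_0 mul1n big_mkcond /= => {2}->.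
by apply: eq_bigr => t _; case: (_ < _).
Qed.

Lemma prod_le_bprod (a : 'I_p -> nat) : \prod_t a t <= bprod (\sum_t a t).
Proof. by apply: leq_prod_balanced; [exact: bpart_balanced | rewrite sum_bpart]. Qed.

Lemma prod_balanced_bprod (a : 'I_p -> nat) :
  balanced a -> \prod_t a t = bprod (\sum_t a t).
Proof.
by move=> bal_a; apply: prod_balanced_eq; [|exact: bpart_balanced|rewrite sum_bpart].
Qed.

Lemma bprod_small s : s < p -> bprod s = 0.
Proof.
move=> lt_sp; rewrite /bprod (bigD1 (Ordinal lt_sp)) //=.
by rewrite /bpart divn_small ?modn_small ?ltnn.
Qed.

Definition bnext (s : nat) : 'I_p := Ordinal (ltn_pmod s p_gt0).

Lemma bpartS s t : bpart s.+1 t = bpart s t + (t == bnext s).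
Proof.
have lt_tp := ltn_ord t; have lt_rp := ltn_pmod s p_gt0.
change (t == bnext s) with (val t == s %% p); rewrite /bpart.
have -> : s.+1 = s %/ p * p + (s %% p).+1 by rewrite addnS -divn_eq.
rewrite divnMDl // modnMDl; case: (ltngtP (s %% p).+1 p) => [lt_r1p | | eq_r1p]; last 2 first.
- by rewrite ltnNge lt_rp.
- rewrite eq_r1p divnn p_gt0 modnn ltn0 addn0.
  by case: ltngtP; lia.
rewrite (divn_small lt_r1p) (modn_small lt_r1p) ltnS leq_eqVlt.
by case: ltngtP; lia.
Qed.

Definition bincr (s : nat) : nat := \prod_(t | t != bnext s) bpart s t.

Lemma bprodS s : bprod s.+1 = bprod s + bincr s.
Proof.
have incr_eq : \prod_(t | t != bnext s) bpart s.+1 t = bincr s.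
  by apply: eq_bigr => t /negbTE nt; rewrite bpartS nt addn0.
rewrite /bprod (bigD1 (bnext s)) //= [in RHS](bigD1 (bnext s)) //= bpartS eqxx.
by rewrite incr_eq mulnDl mul1n.
Qed.

Lemma bpart_next s : bpart s (bnext s) = s %/ p.
Proof. by rewrite /bpart ltnn addn0. Qed.

Lemma bincr_step s : bincr s <= bincr s.+1.
Proof.
apply: (@leq_trans (\prod_(t | t != bnext s) bpart s.+1 t)).
  by apply: leq_prod => t _; rewrite bpartS leq_addr.
by apply: leq_prod_neq; rewrite bpart_next leq_addr.
Qed.

Lemma bprod_mono : {homo bprod : a b / a <= b}.
Proof. exact: incr_mono bprodS. Qed.

Lemma bprod_exchange x y L :
  x <= y -> bprod (x + L) + bprod y <= bprod (y + L) + bprod x.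
Proof. exact: (incr_exchange bprodS bincr_step L). Qed.

Lemma bprod_superadditive a b : bprod a + bprod b <= bprod (a + b).
Proof. exact: incr_superadditive bprodS bincr_step a b (bprod_small p_gt0). Qed.

End BalancedSplit.

Section CeilDiv.
Variable p : nat.
Local Notation k := p.+1.

Definition ceilk (n : nat) : nat := (n + p) %/ k.

Lemma ceilk_leq n m : (ceilk n <= m) = (n <= k * m).
Proof. by rewrite /ceilk -ltnS ltn_divLR // mulSn; apply/idP/idP; lia. Qed.

Lemma ceilk_ge n : n <= k * ceilk n.
Proof. by rewrite -ceilk_leq. Qed.

Lemma ceilk_unique n c : n <= k * c -> k * c < n + k -> c = ceilk n.
Proof.
move=> ge_n lt_nk; apply/eqP; rewrite eqn_leq ceilk_leq ge_n /=.
by rewrite -ltnS -(ltn_pmul2l (ltn0Sn p)) mulnS; have := ceilk_ge n; lia.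
Qed.

Lemma ceilk_le n : ceilk n <= n.
Proof. by rewrite ceilk_leq mulSn leq_addr. Qed.

Lemma ceilk_mono : {homo ceilk : m n / m <= n}.
Proof. by move=> m n le_mn; rewrite ceilk_leq (leq_trans le_mn) ?ceilk_ge. Qed.

Lemma leq_sub_ceilk m n : m <= n -> m - ceilk m <= n - ceilk n.
Proof.
move=> le_mn; have : ceilk n <= ceilk m + (n - m).
  by rewrite ceilk_leq mulnDr; have := ceilk_ge m; nia.
by have := ceilk_le m; have := ceilk_mono le_mn; lia.
Qed.

End CeilDiv.

Section Delta.
Variable p : nat.
Hypothesis p_gt0 : 0 < p.
Local Notation k := p.+1.
Local Notation ceilk := (ceilk p).

Lemma ceilk_ltn n : k <= n -> ceilk n < n.
Proof.
move=> k_le_n; have n_gt0 : 0 < n by apply: leq_trans k_le_n.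
by rewrite -[ltnRHS](prednK n_gt0) ltnS ceilk_leq; nia.
Qed.

(* [delta n] is the paper's delta_k(n); fuel [n] suffices since [ceilk n < n] for [n >= k]. *)
Fixpoint delta_fuel (fuel n : nat) : nat :=
  if fuel is f.+1 then
    if n < k then 0 else delta_fuel f (ceilk n) + bprod p (n - ceilk n)
  else 0.

Definition delta (n : nat) : nat := delta_fuel n n.

Lemma delta_fuel_enough f1 f2 n :
  n <= f1 -> n <= f2 -> delta_fuel f1 n = delta_fuel f2 n.
Proof.
elim: f1 f2 n => [|f1 IH] [|f2] n /= le_n1 le_n2; try by move: le_n1 le_n2; case: n.
case: ltnP => // k_le_n; have lt_cn := ceilk_ltn k_le_n.
by congr (_ + _); apply: IH; lia.
Qed.

Lemma deltaE n :
  delta n = if n < k then 0 else delta (ceilk n) + bprod p (n - ceilk n).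
Proof.
rewrite /delta; case: n => [|n] //=; case: ltnP => // k_le_n.
by congr (_ + _); apply: delta_fuel_enough => //; have := ceilk_ltn k_le_n; lia.
Qed.

Lemma delta_small n : n < k -> delta n = 0.
Proof. by move=> lt_nk; rewrite deltaE lt_nk. Qed.

Lemma leq_delta_split m n : k <= n -> n <= k * m -> m < n ->
  delta m + bprod p (n - m) <= delta n.
Proof.
have [M] := ubnP m; elim: M m n => // M IH m n /ltnSE le_mM k_le_n n_le_km lt_mn.
set c := ceilk n; have le_cm : c <= m by rewrite ceilk_leq.
have delta_n : delta n = delta c + bprod p (n - c) by rewrite deltaE ltnNge k_le_n.
have [lt_mk | k_le_m] := ltnP m k.
  rewrite delta_small // add0n delta_n (leq_trans _ (leq_addl _ _)) //.
  by apply: (bprod_mono p_gt0); apply: leq_sub2l.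
set m' := ceilk m; have lt_m'm : m' < m := ceilk_ltn k_le_m.
have m'_gt0 : 0 < m'.
  by rewrite lt0n -leqn0 ceilk_leq muln0 -ltnNge (leq_trans _ k_le_m).
rewrite deltaE ltnNge k_le_m /= -/m' -addnA.
have [le_cm' | lt_m'c] := leqP c m'.
  have merge : bprod p (m - m') + bprod p (n - m) <= bprod p (n - m').
    have -> : n - m' = m - m' + (n - m) by lia.
    exact: bprod_superadditive.
  apply: leq_trans (IH m' n _ k_le_n _ _); first by rewrite leq_add2l.
  - exact: leq_trans lt_m'm le_mM.
  - by rewrite -ceilk_leq.
  - exact: ltn_trans lt_m'm lt_mn.
have exchange :
    bprod p (m - m') + bprod p (n - m) <= bprod p (n - c) + bprod p (c - m').
  have le_sub : c - m' <= n - m by have := leq_sub_ceilk p (ltnW lt_mn); lia.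
  have -> : m - m' = c - m' + (m - c) by lia.
  have -> : n - c = n - m + (m - c) by lia.
  exact: bprod_exchange.
rewrite delta_n; apply: leq_trans (leq_add (leqnn _) exchange) _.
rewrite addnCA [leqRHS]addnC leq_add2l.
have [lt_ck | k_le_c] := ltnP c k.
  by rewrite !delta_small ?bprod_small //; lia.
apply: IH => //; first exact: leq_trans lt_m'm le_mM.
exact: leq_trans le_cm (ceilk_ge p m).
Qed.

End Delta.

Lemma big_neq_lift (R : Type) (idx : R) (op : Monoid.com_law idx) n (i : 'I_n.+1)
    (F : 'I_n.+1 -> R) :
  \big[op/idx]_(j | j != i) F j = \big[op/idx]_(t < n) F (lift i t).
Proof.
rewrite (reindex_omap (lift i) (unlift i)) => [|j ji]; last first.
  by case: unliftP ji => [t ->|->]; rewrite ?eqxx.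
by apply: eq_bigl => t; rewrite liftK eqxx eq_sym neq_lift.
Qed.

Lemma ltn_sum (I : finType) (a b : I -> nat) (x : I) :
  (forall t, a t <= b t) -> a x < b x -> \sum_t a t < \sum_t b t.
Proof.
move=> le_ab lt_x; rewrite (bigD1 x) //= [ltnRHS](bigD1 x) //=.
by rewrite -addSn leq_add // leq_sum.
Qed.

Lemma card_bigcup_disjoint (I T : finType) (P : I -> {set T}) :
  (forall i j, i != j -> [disjoint P i & P j]) -> #|\bigcup_i P i| = \sum_i #|P i|.
Proof.
move=> disjP; rewrite -sum1_card partition_disjoint_bigcup //.
by under eq_bigr do rewrite sum1_card.
Qed.

Section Hypergraph.
Variables (T : finType) (k : nat).

Definition transversals (V : {set T}) (P : 'I_k -> {set T}) : {set {set T}} :=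
  [set e : {set T} | [&& e \subset V, #|e| == k & [forall j, #|e :&: P j| == 1]]].

Section Partition.
Variables (V : {set T}) (P : 'I_k -> {set T}).
Hypothesis partP : kpartition V P.

Lemma part_sub j : P j \subset V.
Proof. by case: partP => _ <- _; apply: (bigcup_sup j). Qed.

Lemma part_uniq j j' x : x \in P j -> x \in P j' -> j = j'.
Proof.
case: partP => disjP _ _ xj xj'.
by case: (eqVneq j j') => // /disjP /disjointFr /(_ xj); rewrite xj'.
Qed.

Lemma sum_card_parts : \sum_j #|P j| = #|V|.
Proof. by case: partP => disjP <- _; rewrite card_bigcup_disjoint. Qed.

Lemma card_le_max_part i : (forall j, #|P j| <= #|P i|) -> #|V| <= k * #|P i|.
Proof.
move=> maxi; rewrite -sum_card_parts.
have -> : k * #|P i| = \sum_(j < k) #|P i| by rewrite sum_nat_const card_ord.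
exact: leq_sum.
Qed.

Lemma equitable_part_lt i : equitable P -> k * #|P i| < #|V| + k.
Proof.
move=> equiP; rewrite -sum_card_parts.
have -> : k * #|P i| = \sum_(j < k) #|P i| by rewrite sum_nat_const card_ord.
have -> : \sum_j #|P j| + k = \sum_j (#|P j| + 1).
  by rewrite big_split /= sum_nat_const card_ord muln1.
by apply: (ltn_sum (x := i)) => [j|]; [exact: equiP | rewrite addn1].
Qed.

Section Transversals.
Variable f : {ffun 'I_k -> T}.
Hypothesis fP : forall j, f j \in P j.

Lemma setI_image_part j : [set f j' | j' : 'I_k] :&: P j = [set f j].
Proof.
apply/setP => x; rewrite !inE; apply/andP/eqP => [[/imsetP[j' _ ->] xj] | ->].
  by rewrite (part_uniq (fP j') xj).
by split; [apply: imset_f | apply: fP].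
Qed.

Lemma image_transversal : [set f j | j : 'I_k] \in transversals V P.
Proof.
rewrite inE; apply/and3P; split.
- by apply/subsetP => _ /imsetP[j _ ->]; apply: (subsetP (part_sub j)).
- rewrite card_imset ?cardsT ?card_ord // => j j' fjj'.
  by apply: (part_uniq (fP j)); rewrite fjj'.
- by apply/forallP => j; rewrite setI_image_part cards1.
Qed.

End Transversals.

Lemma transversal_image e : e \in transversals V P ->
  exists2 f : {ffun 'I_k -> T}, forall j, f j \in P j & e = [set f j | j : 'I_k].
Proof.
rewrite inE => /and3P[eV _ /forallP e1].
have /fin_all_exists[f ef] : forall j, exists x, e :&: P j = [set x].
  by move=> j; apply/cards1P.
have fe j : f j \in e :&: P j by rewrite ef set11.
exists (finfun f) => [j | ]; first by rewrite ffunE; case/setIP: (fe j).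
apply/setP => x; apply/idP/imsetP => [xe | [j _ ->]].
  have : x \in \bigcup_j P j by case: partP => _ -> _; apply: (subsetP eV).
  case/bigcupP => j _ xj; exists j => //; rewrite ffunE.
  by apply/set1P; rewrite -ef inE xe xj.
by rewrite ffunE; case/setIP: (fe j).
Qed.

Section Through.
Variables (i : 'I_k) (v : T).
Hypothesis vPi : v \in P i.

Definition through_sets (j : 'I_k) : {set T} := if j == i then [set v] else P j.

Lemma family_through_mem f : f \in family through_sets -> forall j, f j \in P j.
Proof.
move=> /familyP fF j; have := fF j; rewrite /through_sets.
by case: eqP => [-> /set1P -> | _].
Qed.

Lemma family_through_at f : f \in family through_sets -> f i = v.
Proof. by move=> /familyP /(_ i); rewrite /through_sets eqxx => /set1P. Qed.

Lemma transversals_through :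
  [set e in transversals V P | v \in e] =
  [set [set f j | j : 'I_k] | f : {ffun 'I_k -> T} in family through_sets].
Proof.
apply/setP => e; rewrite inE.
apply/andP/imsetP => [[/transversal_image[f fP ->] vf] | [f fF ->]].
  exists f => //; apply/familyP => j; rewrite /through_sets.
  case: eqP => [-> | _]; last exact: fP.
  have : v \in [set f j | j : 'I_k] :&: P i by rewrite inE vf vPi.
  by rewrite setI_image_part // => /set1P ->; rewrite set11.
split; first exact: image_transversal (family_through_mem fF).
by apply/imsetP; exists i; rewrite ?family_through_at.
Qed.

Lemma card_transversals_through :
  #|[set e in transversals V P | v \in e]| = \prod_(j | j != i) #|P j|.
Proof.
rewrite transversals_through card_in_imset => [|f f' fF f'F eq_im]; last first.
  apply/ffunP => j; apply/set1P.
  rewrite -(setI_image_part (family_through_mem f'F)) -eq_im.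
  by rewrite (setI_image_part (family_through_mem fF)) set11.
rewrite card_family foldrE big_image /= (bigD1 i) //= /through_sets eqxx cards1 mul1n.
by apply: eq_bigr => j /negbTE ->.
Qed.

End Through.

End Partition.

Lemma deg0 (v : T) : deg set0 v = 0.
Proof. by apply/eqP; rewrite cards_eq0; apply/eqP/setP => e; rewrite !inE. Qed.

Lemma deg_joinE V (P : 'I_k -> {set T}) (Es : 'I_k -> {set {set T}}) i v :
    1 < k -> kpartition V P -> (forall j e, e \in Es j -> e \subset P j) -> v \in P i ->
  deg (joinE V P Es) v = deg (Es i) v + \prod_(j | j != i) #|P j|.
Proof.
move=> k_gt1 partP EsP vPi; rewrite /deg -(card_transversals_through partP vPi).
have -> : [set e in joinE V P Es | v \in e] =
    [set e in Es i | v \in e] :|: [set e in transversals V P | v \in e].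
  apply/setP => e; rewrite !inE; case ve: (v \in e); rewrite ?andbF ?andbT //.
  congr (_ || _); apply/bigcupP/idP => [[j _ eEj] | eEi]; last by exists i.
  by rewrite -(part_uniq partP (subsetP (EsP _ _ eEj) _ ve) vPi).
rewrite cardsU.
have -> : [set e in Es i | v \in e] :&: [set e in transversals V P | v \in e] = set0.
  apply/setP => e; rewrite !inE.
  apply/negP => /and3P[/andP[eEi _] /and3P[_ /eqP card_e /forallP/(_ i) ePi1] _].
  by move: ePi1; rewrite (setIidPl (EsP _ _ eEi)) card_e eqn_leq leqNgt k_gt1.
by rewrite cards0 subn0.
Qed.

Lemma inG_sub (V : {set T}) E : inG k V E -> forall e, e \in E -> e \subset V.
Proof.
elim=> [W _ e | W P Es _ partP _ IH e]; first by rewrite inE.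
rewrite inE => /orP[/bigcupP[j _ eEj] | ]; last by rewrite inE => /and3P[].
exact: subset_trans (IH j e eEj) (part_sub partP j).
Qed.

Lemma isH_inG (V : {set T}) E : isH k V E -> inG k V E.
Proof. by elim=> [W *| W P Es *]; [apply: inG_small | apply: inG_step]. Qed.

Lemma goodH_goodG (V : {set T}) E v : goodH k V E v -> goodG k V E v.
Proof.
elim=> [W w *| W P Es i w k_le_W partP _ isHP maxi _ IH]; first exact: goodG_small.
by apply: goodG_step => // j; apply: isH_inG.
Qed.

Lemma goodG_in (V : {set T}) E v : goodG k V E v -> v \in V.
Proof.
elim=> // W P Es i w _ partP _ _ _ IH.
exact: subsetP (part_sub partP i) _ IH.
Qed.

End Hypergraph.

Section GoodVertexDegree.
Variables (p : nat) (T : finType).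
Hypothesis p_gt0 : 0 < p.
Local Notation k := p.+1.

Lemma deg_join_lift (V : {set T}) (P : 'I_k -> {set T}) Es i v :
    kpartition V P -> (forall j, inG k (P j) (Es j)) -> v \in P i ->
  deg (joinE V P Es) v = deg (Es i) v + \prod_t #|P (lift i t)|.
Proof.
move=> partP inGP vPi.
by rewrite (deg_joinE _ partP _ vPi) ?big_neq_lift // => j; apply: inG_sub.
Qed.

Lemma sum_card_other_parts (V : {set T}) (P : 'I_k -> {set T}) i :
  kpartition V P -> \sum_t #|P (lift i t)| = #|V| - #|P i|.
Proof.
by move=> partP; rewrite -(sum_card_parts partP) (bigD1 i) //= big_neq_lift addKn.
Qed.

Lemma deg_goodG_le (V : {set T}) E v : goodG k V E v -> deg E v <= delta p #|V|.
Proof.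
elim=> [W w _ _ | W P Es i w k_le_W partP inGP maxi goodw IH]; first by rewrite deg0.
rewrite (deg_join_lift partP inGP (goodG_in goodw)).
apply: leq_trans (leq_add IH (prod_le_bprod p_gt0 _)) _.
rewrite (sum_card_other_parts i partP); apply: leq_delta_split => //.
- exact: card_le_max_part.
- by case: partP.
Qed.

Lemma deg_goodH (V : {set T}) E v : goodH k V E v -> deg E v = delta p #|V|.
Proof.
elim=> [W w ltW _ | W P Es i w k_le_W partP equiP isHP maxi goodw IH].
  by rewrite deg0 delta_small.
have ceil_i : #|P i| = ceilk p #|W|.
  by apply: ceilk_unique; [exact: card_le_max_part | exact: equitable_part_lt].
rewrite (deg_join_lift partP (fun j => isH_inG (isHP j)) (goodG_in (goodH_goodG goodw))).
rewrite IH (prod_balanced_bprod p_gt0) // (sum_card_other_parts i partP).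
by rewrite [RHS](deltaE p_gt0) ltnNge k_le_W /= ceil_i.
Qed.

End GoodVertexDegree.

Theorem lemma5p4 (k : nat) (T : finType) (V : {set T}) (E : {set {set T}})
    (v : T) :
  3 <= k -> inG k V E -> goodG k V E v ->
  forall (T' : finType) (V' : {set T'}) (E' : {set {set T'}}) (w : T'),
    #|V'| = #|V| -> isH k V' E' -> goodH k V' E' w ->
    deg E v <= deg E' w.
Proof.
case: k => [|p] // k_ge3 _ goodv T' V' E' w eq_card _ goodw.
have p_gt0 : 0 < p by lia.
by rewrite (deg_goodH p_gt0 goodw) eq_card deg_goodG_le.
Qed.
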